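(* Let $p\ge 0.5$ and assume that for every $x\in\mathcal X$ the minimum below is attained. The optimal cost CF algorithm $$A_{\mathrm{OC}}(x)=\operatorname*{argmin}_{x'\in\mathcal X:\ m(x')\ge p} c(x,x'),$$ where ties among minimizers are broken by a fixed deterministic rule (a fixed total order on $\mathcal X$, independent of $x$), is IPF stable globally.
   Context: Input space $\mathcal X=\mathcal X_1\times\cdots\times\mathcal X_D$, where each feature $d$ is either categorical ($\mathcal X_d$ a finite set) or numerical ($\mathcal X_d\subseteq\mathbb R$). A model is a function $m:\mathcal X\to[0,1]$. Cost: $c(x,x')=\sum_{d=1}^D c_d(x_d,x'_d)$ with $c_d(x_d,x'_d)=\mathbb 1\{x_d\neq x'_d\}$ for categorical $d$ and $c_d(x_d,x'_d)=|F_d(x_d)-F_d(x'_d)|$ for numerical $d$, where $F_d$ is a fixed cumulative distribution function (nondecreasing) of feature $d$. A CF algorithm $A$ maps each $x\in\mathcal X$ to a probability distribution over $\mathcal X$; $A$ is deterministic at $x$ if this distribution is a point mass, written $A(x)$. $\Phi(x,x')$ denotes the set of all $w\in\mathcal X$ such that for each numerical $d$, $w_d$ lies in the closed interval between $x_d$ and $x'_d$, and for each categorical $d$, $w_d\in\{x_d,x'_d\}$. IPF stable: $A$ is IPF stable at $x$ if (1) $A$ is deterministic at $x$, and (2) for all $w\in\Phi(x,A(x))$, $A$ is deterministic at $w$ and $A(w)=A(x)$. $A$ is IPF stable globally if it is IPF stable at every $x\in\mathcal X$. *)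

From HB Require Import structures.
From mathcomp Require Import all_boot all_order all_algebra.
From mathcomp Require Import all_classical all_reals all_analysis.
Set Implicit Arguments. Unset Strict Implicit. Unset Printing Implicit Defensive.
Import Order.TTheory GRing.Theory Num.Theory.
Import numFieldNormedType.Exports.
Local Open Scope classical_set_scope.
Local Open Scope ring_scope.

Section CF.
Variable R : realType.

Definition is_cdf (F : R -> R) : Prop :=
  [/\ {homo F : x y / x <= y},
      F x @[x --> -oo] --> (0:R),
      F x @[x --> +oo] --> (1:R) &
      forall x : R, F y @[y --> x^'+] --> F x].

Inductive kind :=
| Categorical (T : finType)
| Numerical (Xd : set R) (F : R -> R).

Definition fty (k : kind) : Type :=
  match k with
  | Categorical T => T
  | Numerical Xd _ => {r : R | Xd r}
  end.

Definition cost_d (k : kind) : fty k -> fty k -> R :=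
  match k return fty k -> fty k -> R with
  | Categorical T => fun a b => if a == b then 0 else 1
  | Numerical Xd F => fun a b => `|F (proj1_sig a) - F (proj1_sig b)|
  end.

Definition between_d (k : kind) : fty k -> fty k -> fty k -> Prop :=
  match k return fty k -> fty k -> fty k -> Prop with
  | Categorical T => fun a b w => w = a \/ w = b
  | Numerical Xd F => fun a b w =>
      Num.min (proj1_sig a) (proj1_sig b) <= proj1_sig w <=
      Num.max (proj1_sig a) (proj1_sig b)
  end.

Definition kind_ok (k : kind) : Prop :=
  match k with
  | Categorical _ => True
  | Numerical _ F => is_cdf F
  end.

Variable D : nat.
Variable K : 'I_D -> kind.

Definition X := forall d : 'I_D, fty (K d).

Definition cost (x x' : X) : R := \sum_(d < D) cost_d (x d) (x' d).

Definition Phi (x x' : X) : set X :=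
  [set w | forall d : 'I_D, between_d (x d) (x' d) (w d)].

(* IPF stability, for a deterministic CF algorithm A : X -> X
   (A(x) is the point-mass output at x). *)
Definition IPF_stable_at (A : X -> X) (x : X) : Prop :=
  forall w, Phi x (A x) w -> A w = A x.

Definition IPF_stable (A : X -> X) : Prop := forall x, IPF_stable_at A x.

Definition total_order (le : X -> X -> Prop) : Prop :=
  [/\ forall x, le x x,
      forall x y, le x y -> le y x -> x = y,
      forall x y z, le x y -> le y z -> le x z &
      forall x y, le x y \/ le y x].

Definition is_optimal_cost_alg (m : X -> R) (p : R) (le : X -> X -> Prop)
    (A : X -> X) : Prop :=
  forall x,
    [/\ p <= m (A x),
        forall y, p <= m y -> cost x (A x) <= cost x y &
        forall y, p <= m y -> cost x y = cost x (A x) -> le (A x) y].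

End CF.

From HB Require Import structures.
From mathcomp Require Import all_boot all_order all_algebra.
From mathcomp Require Import all_classical all_reals all_analysis.
From mathcomp Require Import lra.
Import Order.TTheory GRing.Theory Num.Theory.
Local Open Scope ring_scope.

(* The optimal-cost algorithm is IPF stable because the cost behaves like a
   distance along the box Phi(x, A x):
   1. the cost c satisfies the triangle inequality (coordinatewise: the
      discrete metric, and |F u - F v| for a nondecreasing F), and
   2. every w in Phi(x, a) lies on a "geodesic" from x to a, i.e.
      c(x, w) + c(w, a) = c(x, a), since a nondecreasing F maps values lying
      between u and t to values lying between F u and F t.
   3. In any space with a triangle inequality, if a is the tie-broken least
      minimizer of c(x, .) over a set S and w is on a geodesic from x to a,
      then a is also the tie-broken least minimizer of c(w, .) over S.
   Least minimizers for an antisymmetric order are unique, so A w = A x. *)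

Section LeastMinimizer.
Context {R : realType} {T : Type}.
Variables (S : T -> Prop) (le : T -> T -> Prop).

Definition least_minimizer (f : T -> R) (a : T) : Prop :=
  [/\ S a, forall y, S y -> f a <= f y &
      forall y, S y -> f y = f a -> le a y].

Lemma least_minimizer_unique (f : T -> R) (a b : T) :
  (forall x y, le x y -> le y x -> x = y) ->
  least_minimizer f a -> least_minimizer f b -> a = b.
Proof.
move=> antisym [Sa mina tiea] [Sb minb tieb].
have fab : f b = f a by apply/eqP; rewrite eq_le minb // mina.
by apply: antisym; [apply: tiea | apply: tieb].
Qed.

Variable c : T -> T -> R.
Hypothesis c_triangle : forall u v z, c u z <= c u v + c v z.

(* Moving the base point along a geodesic towards a least minimizer keeps
   it a least minimizer: c(w, y) - c(w, a) >= c(x, y) - c(x, a) >= 0. *)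
Lemma least_minimizer_geodesic (x w a : T) :
  c x w + c w a = c x a ->
  least_minimizer (c x) a -> least_minimizer (c w) a.
Proof.
move=> geo [Sa mina tiea]; split=> // [y Sy|y Sy tie].
- by have := mina y Sy; have := c_triangle x w y; lra.
- apply: tiea => //; apply/eqP; rewrite eq_le mina // andbT.
  by have := c_triangle x w y; lra.
Qed.

End LeastMinimizer.

Arguments least_minimizer_unique {R T S le f a b}.
Arguments least_minimizer_geodesic {R T S le c} c_triangle {x w a}.

Lemma dist_between {R : realType} (u v t : R) :
  Num.min u t <= v <= Num.max u t -> `|u - v| + `|v - t| = `|u - t|.
Proof.
wlog ut : u t / u <= t.
  move=> hwlog; have /orP[ut|tu] := le_total u t; first exact: hwlog.
  rewrite minC maxC => /(hwlog _ _ tu) e.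
  by rewrite (distrC u v) (distrC v t) (distrC u t) addrC.
rewrite (min_idPl ut) (max_idPr ut) => /andP[uv vt].
rewrite !ler0_norm ?subr_le0 ?(le_trans uv) //; lra.
Qed.

Lemma homo_between {R : realType} {F : R -> R} (u v t : R) :
  {homo F : x y / x <= y} ->
  Num.min u t <= v <= Num.max u t ->
  Num.min (F u) (F t) <= F v <= Num.max (F u) (F t).
Proof.
move=> hF; have /orP[ut|tu] := le_total u t.
- rewrite (min_idPl ut) (max_idPr ut) (min_idPl (hF _ _ ut)) (max_idPr (hF _ _ ut)).
  by move=> /andP[uv vt]; rewrite !hF.
- rewrite (min_idPr tu) (max_idPl tu) (min_idPr (hF _ _ tu)) (max_idPl (hF _ _ tu)).
  by move=> /andP[tv vu]; rewrite !hF.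
Qed.

Lemma cost_d_triangle (R : realType) (k : kind R) (a b c : fty k) :
  cost_d a c <= cost_d a b + cost_d b c.
Proof.
case: k a b c => [T|Xd F] a b c /=.
- have [->|ac] := eqVneq a c.
    by case: (_ == _); case: (_ == _); lra.
  have [<-|ab] := eqVneq a b; first by rewrite (negbTE ac) add0r.
  by case: (_ == _); lra.
- by apply: le_trans (ler_normD _ _); rewrite addrA subrK.
Qed.

Lemma cost_d_between (R : realType) (k : kind R) (x a w : fty k) :
  kind_ok k -> between_d x a w -> cost_d x w + cost_d w a = cost_d x a.
Proof.
case: k x a w => [T|Xd F] x a w /=.
- by move=> _ [->|->]; rewrite eqxx ?add0r ?addr0.
- by move=> [hF _ _ _] /(homo_between _ _ _ hF) /dist_between.
Qed.

Section TotalCost.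
Context {R : realType} {D : nat} {K : 'I_D -> kind R}.

Lemma cost_triangle (u v z : X K) : cost u z <= cost u v + cost v z.
Proof.
rewrite /cost -big_split /=; apply: ler_sum => d _; exact: cost_d_triangle.
Qed.

Lemma cost_Phi {x a w : X K} :
  (forall d, kind_ok (K d)) -> Phi x a w -> cost x w + cost w a = cost x a.
Proof.
move=> Kok Hw; rewrite /cost -big_split /=; apply: eq_bigr => d _.
exact: cost_d_between.
Qed.

End TotalCost.

Theorem theorem2 (R : realType) (D : nat) (K : 'I_D -> kind R)
    (m : X K -> R) (p : R) (le : X K -> X K -> Prop) (A : X K -> X K) :
  (forall d : 'I_D, kind_ok (K d)) ->
  (forall x, 0 <= m x <= 1) ->
  1 / 2 <= p ->
  (forall x : X K, exists x' : X K,
      p <= m x' /\ forall y, p <= m y -> cost x x' <= cost x y) ->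
  total_order le ->
  is_optimal_cost_alg m p le A ->
  IPF_stable A.
Proof.
move=> Kok _ _ _ [_ antisym _ _] HA x w Hw.
pose S y : Prop := p <= m y.
have Ax_at_x : least_minimizer S le (cost x) (A x) by exact: HA.
have Aw_at_w : least_minimizer S le (cost w) (A w) by exact: HA.
have Ax_at_w := least_minimizer_geodesic cost_triangle (cost_Phi Kok Hw) Ax_at_x.
exact: (least_minimizer_unique antisym Aw_at_w Ax_at_w).
Qed.
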